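(* The step relation of algorithm BFS under the unfair daemon, $\mathrm{Step}=\mathrm{Step}^{(r)}\cup\mathrm{Step}^{(d)}\cup\mathrm{Step}^{(p)}$, is well-founded: from every initial configuration, every sequence of steps is finite (i.e. every execution reaches a terminal configuration, one in which no node is enabled).
   Context: Let $G$ be a finite, connected, undirected graph with node set $V$ and a distinguished node $r$ (the root). Each node $p$ has a fixed ordered list $N(p)$ of its neighbours. A configuration $\gamma$ assigns to each node $p$ a value $\gamma.p.d\in\mathbb N$ (unbounded) and a neighbour $\gamma.p.par\in N(p)$. For a non-root node $p$ let $Dist_p(\gamma)=\min\{\gamma.q.d+1 : q\in N(p)\}$. Algorithm BFS (Dolev et al.) has the following actions. Root: enabled iff $\gamma.r.d\neq 0$; executing it sets $r.d:=0$. Non-root $p$, action CD: enabled iff $\gamma.p.d\ne Dist_p(\gamma)$; executing sets $p.d:=Dist_p(\gamma)$. Non-root $p$, action CP: enabled iff $\gamma.p.d=Dist_p(\gamma)$ and $\gamma.q_0.d+1\neq\gamma.p.d$ where $q_0=\gamma.p.par$; executing sets $p.par$ to the first $q$ in $N(p)$ with $\gamma.q.d+1=\gamma.p.d$. A node is enabled if one of its actions is enabled. A step $\gamma\to\gamma'$ (relation $\mathrm{Step}$, unfair daemon) holds iff there is a nonempty set $S$ of nodes enabled in $\gamma$ such that $\gamma'$ is obtained by every $p\in S$ simultaneously executing its enabled action (evaluated in $\gamma$), all other nodes unchanged. $\mathrm{Step}^{(r)}$: steps with $\gamma.r.d\ne\gamma'.r.d$. $\mathrm{Step}^{(d)}$: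 steps with $\gamma.r.d=\gamma'.r.d$ and $\gamma.p.d\ne\gamma'.p.d$ for some $p$. $\mathrm{Step}^{(p)}$: steps with $\gamma.p.d=\gamma'.p.d$ for all $p$. A relation is well-founded if it admits no infinite forward chain. *)

From mathcomp Require Import all_boot.
Set Implicit Arguments. Unset Strict Implicit. Unset Printing Implicit Defensive.

Section BFS.
Variables (V : finType) (Nb : V -> seq V) (r : V).

Definition adj : rel V := fun p q => q \in Nb p.

Definition graph_ok : Prop :=
  [/\ forall p, uniq (Nb p),
      forall p q, adj p q = adj q p,
      forall p, ~~ adj p p
    & forall p q, connect adj p q].

Record config := Config { cd : V -> nat; cpar : V -> V }.

Definition valid (c : config) : Prop := forall p, cpar c p \in Nb p.

(* Dist_p(c) = min { d q + 1 | q in N(p) }  (N(p) nonempty for p != r). *)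
Definition Dist (c : config) (p : V) : nat :=
  match Nb p with
  | [::] => 0
  | q0 :: s => foldr (fun q m => minn (cd c q).+1 m) (cd c q0).+1 s
  end.

Definition root_enabled (c : config) : bool := cd c r != 0.
Definition CD_enabled (c : config) (p : V) : bool :=
  (p != r) && (cd c p != Dist c p).
Definition CP_enabled (c : config) (p : V) : bool :=
  [&& p != r, cd c p == Dist c p & (cd c (cpar c p)).+1 != cd c p].

Definition enabled (c : config) (p : V) : bool :=
  if p == r then root_enabled c else CD_enabled c p || CP_enabled c p.

Definition first_par (c : config) (p : V) : V :=
  nth p (Nb p) (find (fun q => (cd c q).+1 == cd c p) (Nb p)).

Definition exec (c : config) (p : V) : nat * V :=
  if p == r then (0, cpar c p)
  else if CD_enabled c p then (Dist c p, cpar c p)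
  else (cd c p, first_par c p).

Definition Step (c c' : config) : Prop :=
  exists S : {set V},
    [/\ S != set0,
        forall p, p \in S -> enabled c p
      & forall p, (cd c' p, cpar c' p) =
                  if p \in S then exec c p else (cd c p, cpar c p)].

Definition Step_r (c c' : config) : Prop := Step c c' /\ cd c r <> cd c' r.
Definition Step_d (c c' : config) : Prop :=
  Step c c' /\ cd c r = cd c' r /\ exists p, cd c p <> cd c' p.
Definition Step_p (c c' : config) : Prop :=
  Step c c' /\ forall p, cd c p = cd c' p.

(* Well-foundedness = no infinite forward chain (over valid configurations). *)
Definition no_infinite_chain (R : config -> config -> Prop) : Prop :=
  ~ exists f : nat -> config, valid (f 0) /\ forall n, R (f n) (f n.+1).

End BFS.

(** Along an infinite execution, steps that change no distance only redirect parent
    pointers and strictly decrease the number of CP-enabled nodes, so distances change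
    infinitely often; they also stay below (initial maximum) + (path length to the root).
    Hence some node changes from or to some value infinitely often; take such a value [m]
    minimal.  Eventually no change involves a value below [m].  When afterwards a node [p]
    enters [m], it does so through a neighbour [q] with [d q = m - 1]; [q] can no longer move,
    so [Dist p <= m], and every later change of [p] lands on a value [>= m], i.e. on [m]
    itself: [p] stays at [m] forever, contradicting that it enters [m] infinitely often. *)

From Stdlib Require Import Classical.
From mathcomp Require Import all_boot.
Set Implicit Arguments. Unset Strict Implicit. Unset Printing Implicit Defensive.

Section Temporal.
Implicit Types (P : nat -> Prop) (g : nat -> nat) (m : nat).

Definition eventually P := exists N, forall n, N <= n -> P n.
Definition infinitely_often P := forall N, exists2 n, N <= n & P n.

Lemma not_infinitely_often P : ~ infinitely_often P -> eventually (fun n => ~ P n).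
Proof.
move=> notio; apply: NNPP => notev; apply: notio => N.
apply: NNPP => none; apply: notev; exists N => n Nn Pn; by apply: none; exists n.
Qed.

Lemma eventually_forall (T : finType) (P : T -> nat -> Prop) :
  (forall x, eventually (P x)) -> eventually (fun n => forall x, P x n).
Proof.
move=> evP; suff [N HN] : eventually (fun n => forall x, x \in enum T -> P x n).
  by exists N => n Nn x; apply: HN; rewrite ?mem_enum.
elim: (enum T) => [|x s [N HN]]; first by exists 0.
have [M HM] := evP x; exists (maxn M N) => n; rewrite geq_max => /andP[Mn Nn] y.
by rewrite in_cons => /predU1P[->|ys]; [apply: HM | apply: HN].
Qed.

Lemma infinitely_often_exists (T : finType) (P : T -> nat -> Prop) :
  infinitely_often (fun n => exists x, P x n) -> exists x, infinitely_often (P x).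
Proof.
move=> ioP; apply: NNPP => none.
have [N HN] := eventually_forall
  (fun x => not_infinitely_often (fun iox => none (ex_intro _ x iox))).
by have [n Nn [x]] := ioP N; apply: HN.
Qed.

Lemma not_eventually_decreasing (mu : nat -> nat) : ~ eventually (fun n => mu n.+1 < mu n).
Proof.
case=> N dec; have drop k : mu (N + k) + k <= mu N.
  elim: k => [|k IH]; first by rewrite !addn0.
  by rewrite !addnS (leq_trans _ IH) // ltn_add2r dec ?leq_addr.
by have := drop (mu N).+1; rewrite addnS ltnNge leq_addl.
Qed.

Lemma geq_ind (P : nat -> Prop) s :
  P s -> (forall u, s <= u -> P u -> P u.+1) -> forall u, s <= u -> P u.
Proof.
move=> Ps step u /subnKC <-; elim: (u - s) => [|k IH]; first by rewrite addn0.
by rewrite addnS; apply: step; rewrite ?leq_addr.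
Qed.

Lemma crossing (h : nat -> bool) i j :
  i <= j -> h i -> ~~ h j -> exists2 s, i <= s < j & h s && ~~ h s.+1.
Proof.
move=> + hi; elim: j => [|j IH]; first by rewrite leqn0 => /eqP <-; rewrite hi.
rewrite leq_eqVlt => /predU1P[<-|]; first by rewrite hi.
rewrite ltnS => ij hj; case hj' : (h j); first by exists j; rewrite ?ij ?hj' ?ltnSn.
by have [s /andP[i_s sj] hs] := IH ij (negbT hj'); exists s; rewrite // i_s ltnS ltnW.
Qed.

Definition touches g m n := g n.+1 != g n /\ (g n = m \/ g n.+1 = m).
Definition enters g m n := g n != m /\ g n.+1 = m.

Lemma infinitely_often_enters g m :
  infinitely_often (touches g m) -> infinitely_often (enters g m).
Proof.
move=> io N; have [n Nn [chg [gn | gn1]]] := io N; last first.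
  by exists n => //; split; rewrite // -gn1 eq_sym.
have [n' nn' [_ hit]] := io n.+1.
have [j nj gj] : exists2 j, n.+1 <= j & g j = m.
  by case: hit => ?; [exists n' | exists n'.+1; rewrite ?(leq_trans nn')].
have leave : g n.+1 != m by rewrite -gn.
have back : ~~ (g j != m) by rewrite gj negbK.
have [s /andP[ns _] /andP[gs /negPn/eqP gs1]] :=
  crossing (h := fun x => g x != m) nj leave back.
by exists s; rewrite ?(leq_trans Nn (ltnW ns)).
Qed.

End Temporal.

Section DistTheory.
Variable V : eqType.
Implicit Types (g : V -> nat) (s : seq V) (b : nat).

Local Notation minS g b s := (foldr (fun q m => minn (g q).+1 m) b s).

Lemma minS_le_init g b s : minS g b s <= b.
Proof. by elim: s => //= q s IH; rewrite geq_min IH orbT. Qed.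

Lemma minS_le_mem g b s q : q \in s -> minS g b s <= (g q).+1.
Proof.
elim: s => //= x s IH; rewrite in_cons geq_min => /predU1P[->|/IH ->];
by rewrite ?leqnn ?orbT.
Qed.

Lemma minS_attained g b s : minS g b s = b \/ exists2 q, q \in s & minS g b s = (g q).+1.
Proof.
elim: s => [|x s IH] /=; first by left.
rewrite /minn; case: ifP => _; first by right; exists x; rewrite ?mem_head.
by case: IH => [->|[q qs ->]]; [left | right; exists q; rewrite // in_cons qs orbT].
Qed.

End DistTheory.

Section Algorithm.
Variables (V : finType) (Nb : V -> seq V) (r : V).
Implicit Types (c : config V) (p q : V).

Lemma Dist_le c p q : q \in Nb p -> Dist Nb c p <= (cd c q).+1.
Proof.
rewrite /Dist; case: (Nb p) => //= q0 s; rewrite in_cons => /predU1P[->|].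
  exact: minS_le_init.
exact: minS_le_mem.
Qed.

Lemma Dist_attained c p : Nb p != [::] -> exists2 q, q \in Nb p & Dist Nb c p = (cd c q).+1.
Proof.
rewrite /Dist; case: (Nb p) => //= q0 s _.
case: (minS_attained (cd c) (cd c q0).+1 s) => [->|[q qs ->]].
  by exists q0; rewrite ?mem_head.
by exists q; rewrite // in_cons qs orbT.
Qed.

Lemma Dist_ext c c' p : (forall q, cd c q = cd c' q) -> Dist Nb c p = Dist Nb c' p.
Proof.
move=> same; rewrite /Dist; case: (Nb p) => // q0 s; rewrite same.
by elim: s => //= x s ->; rewrite same.
Qed.

Lemma step_new_d c c' p : Step Nb r c c' -> cd c' p != cd c p ->
  cd c' p = if p == r then 0 else Dist Nb c p.
Proof.
case=> S [_ _ exS]; move: (congr1 fst (exS p)) => /= ->.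
case: (p \in S); last by rewrite eqxx.
by rewrite /exec; case: (p =P r) => // _; case: (CD_enabled Nb r c p) => /= [//|/eqP].
Qed.

Lemma root_stays_zero c c' : Step Nb r c c' -> cd c r = 0 -> cd c' r = 0.
Proof.
move=> st c0; have [->//|chg] := eqVneq (cd c' r) (cd c r).
by rewrite (step_new_d st chg) eqxx.
Qed.

Definition path_bounded M c :=
  forall p s, path (adj Nb) p s -> last p s = r -> cd c p <= M + size s.

Lemma path_bounded_step M c c' : Step Nb r c c' -> path_bounded M c -> path_bounded M c'.
Proof.
move=> st bnd p s ps ls; have [->|chg] := eqVneq (cd c' p) (cd c p); first exact: bnd.
rewrite (step_new_d st chg); case: eqP => [_|/eqP pr]; first exact: leq0n.
case: s ps ls => [_ /= pr'|q s /= /andP[pq qs] ls]; first by rewrite pr' eqxx in pr.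
by rewrite (leq_trans (Dist_le c pq)) // addnS ltnS bnd.
Qed.

Hypothesis graphG : graph_ok Nb.

Lemma Nb_nonempty p : p != r -> Nb p != [::].
Proof.
case: graphG => _ _ _ /(_ p r) /connectP[[|q s] /= ps pr] ne.
  by rewrite pr eqxx in ne.
by case/andP: ps; rewrite /adj; case: (Nb p).
Qed.

Lemma first_parP c p : p != r -> cd c p = Dist Nb c p ->
  (cd c (first_par Nb c p)).+1 = cd c p.
Proof.
move=> pr dp; have [q qp Dq] := Dist_attained c (Nb_nonempty pr).
have : has (fun q => (cd c q).+1 == cd c p) (Nb p).
  by apply/hasP; exists q; rewrite // dp Dq.
by move/(nth_find p)/eqP.
Qed.

(* A step changing no distance is made of CP moves only, each disabling its node. *)
Lemma silent_step_CP c c' : Step Nb r c c' -> (forall q, cd c' q = cd c q) ->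
  #|[set p | CP_enabled Nb r c' p]| < #|[set p | CP_enabled Nb r c p]|.
Proof.
move=> [S [/set0Pn[p0 p0S] enS exS]] same.
have Dsame p : Dist Nb c' p = Dist Nb c p by apply: Dist_ext.
have moved p : p \in S -> CP_enabled Nb r c p && ~~ CP_enabled Nb r c' p.
  move=> pS; move: (enS p pS) (exS p); rewrite pS /enabled /exec.
  case: eqP => [-> | /eqP pr].
    by rewrite /root_enabled => + [dr _]; rewrite -(same r) dr.
  case CDp : (CD_enabled Nb r c p) => /=; [move=> _ [dp _] | move=> CPp [_ parp]].
    by move: CDp; rewrite /CD_enabled -(same p) dp eqxx andbF.
  have dp : cd c p = Dist Nb c p by case/and3P: CPp => _ /eqP.
  by rewrite CPp /= /CP_enabled !same Dsame parp first_parP // -dp !eqxx andbF.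
apply/proper_card/properP; split; last first.
  by exists p0; rewrite !inE; case/andP: (moved p0 p0S).
apply/subsetP => p; rewrite !inE; case pS : (p \in S).
  by case/andP: (moved p pS) => _ /negPf ->.
by move: (exS p); rewrite pS => -[_ parp]; rewrite /CP_enabled Dsame parp !same.
Qed.

Section Execution.
Variable f : nat -> config V.
Hypothesis steps : forall n, Step Nb r (f n) (f n.+1).

Local Notation d n p := (cd (f n) p).

Lemma d_bounded : exists B, forall n p, d n p <= B.
Proof.
pose M := \max_q d 0 q; exists (M + #|V|) => n p.
have bnd : path_bounded M (f n).
  elim: n => [|n IH]; last exact: path_bounded_step (steps n) IH.
  by move=> q s _ _; rewrite (leq_trans (leq_bigmax q)) ?leq_addr.
case: graphG => _ _ _ /(_ p r) /connectP[s ps ls].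
case: (shortenP ps) ls => s' ps' /card_uniqP us' _ ls'.
rewrite (leq_trans (bnd p s' ps' (esym ls'))) // leq_add2l.
by apply: ltnW; rewrite -[_ < _]/(size (p :: s') <= _) -us' max_card.
Qed.

Lemma infinitely_many_changes : infinitely_often (fun n => exists p, d n.+1 p != d n p).
Proof.
apply: NNPP => /not_infinitely_often[N silent].
apply: (@not_eventually_decreasing (fun n => #|[set p | CP_enabled Nb r (f n) p]|)).
exists N => n Nn; apply: silent_step_CP (steps n) _ => q.
by apply/eqP/negPn/negP => chg; apply: (silent n Nn); exists q.
Qed.

Lemma level_touched_infinitely_often :
  exists p m, infinitely_often (touches (fun n => d n p) m).
Proof.
have [B dB] := d_bounded.
have io : infinitely_often
    (fun n => exists x : V * 'I_B.+1, touches (fun n => d n x.1) x.2 n).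
  move=> N; have [n Nn [p chg]] := infinitely_many_changes N.
  have dnB : d n p < B.+1 by rewrite ltnS.
  by exists n => //; exists (p, Ordinal dnB); split => //; left.
by have [[p m] iom] := infinitely_often_exists io; exists p, (val m).
Qed.

Lemma level_stable m N p s :
  (forall n q, N <= n -> d n.+1 q != d n q -> m <= d n q /\ m <= d n.+1 q) ->
  N <= s -> enters (fun n => d n p) m s -> forall u, s < u -> d u p = m.
Proof.
move=> above Ns [ds ds1].
have : d s.+1 p = if p == r then 0 else Dist Nb (f s) p.
  by apply: step_new_d (steps s) _; rewrite ds1 eq_sym.
rewrite ds1; case: (p =P r) => [pr m0 | /eqP pr Dm]; first subst p.
  apply: geq_ind => [|v _ dv]; first exact: ds1.
  by rewrite m0 (root_stays_zero (steps v)) // dv.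
have [q qp Dq] := Dist_attained (f s) (Nb_nonempty pr).
have qm : (d s q).+1 = m by rewrite Dm Dq.
have frozen : forall v, s <= v -> d v q = d s q.
  apply: geq_ind => // v sv dv; apply/eqP; apply: contraT; rewrite -dv => chg.
  by have [] := above v q (leq_trans Ns sv) chg; rewrite dv -qm ltnn.
apply: geq_ind => // v sv dv.
have [->//|chg] := eqVneq (d v.+1 p) (d v p).
have [_ le_m] := above v p (leq_trans Ns (ltnW sv)) chg.
apply/eqP; rewrite eqn_leq le_m andbT (step_new_d (steps v) chg) (negbTE pr).
by rewrite (leq_trans (Dist_le _ qp)) // frozen ?qm // ltnW.
Qed.

Lemma no_level_touched_infinitely_often m p :
  ~ infinitely_often (touches (fun n => d n p) m).
Proof.
elim/ltn_ind: m p => m IH p io.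
have [N below] : eventually
    (fun n => forall x : V * 'I_m, ~ touches (fun n => d n x.1) x.2 n).
  by apply: eventually_forall => -[q w]; apply: not_infinitely_often; apply: IH.
have above n q : N <= n -> d n.+1 q != d n q -> m <= d n q /\ m <= d n.+1 q.
  move=> Nn chg; split; rewrite leqNgt; apply/negP => lt.
    by apply: (below n Nn (q, Ordinal lt)); split=> //; left.
  by apply: (below n Nn (q, Ordinal lt)); split=> //; right.
have [s Ns es] := infinitely_often_enters io N.
have [s' ss' [ne _]] := infinitely_often_enters io s.+1.
by rewrite (level_stable above Ns es ss') eqxx in ne.
Qed.

End Execution.
End Algorithm.

Theorem theorem1 (V : finType) (Nb : V -> seq V) (r : V) :
  graph_ok Nb ->
  no_infinite_chain Nb
    (fun c c' => Step_r Nb r c c' \/ Step_d Nb r c c' \/ Step_p Nb r c c').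
Proof.
move=> graphG [f [_ chain]].
have steps n : Step Nb r (f n) (f n.+1) by case: (chain n) => [[]|[[]|[]]].
have [p [m io]] := level_touched_infinitely_often graphG steps.
exact: (no_level_touched_infinitely_often graphG steps io).
Qed.
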